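(* Let $n\ge 3$ and let $C_n$ be the cycle on vertex set $[n]$ with edges $\{i,i+1\}$ for $1\le i\le n-1$ and $\{1,n\}$ (the standard labeling). Then for every positive integer $t$, the independence complex $\Delta(C_n)$ is $t$-sortable with respect to this labeling, i.e. for all independent sets $A,B$ of $C_n$ with $|A|=|B|=t$, both components of $\mathrm{sort}(A,B)$ are independent sets of $C_n$.
   Context: The independence complex $\Delta(G)$ is the simplicial complex of independent sets of $G$. For finite $F,G\subset\mathbb{N}$ with $|F|=r,|G|=s$, write $\mathbf{x}^F\mathbf{x}^G=x_{i_1}\cdots x_{i_{r+s}}$ with $i_1\le\cdots\le i_{r+s}$ (where $\mathbf{x}^F=\prod_{i\in F}x_i$) and set $\mathrm{sort}(F,G)=(\{i_k:k\text{ odd}\},\{i_k:k\text{ even}\})$. A simplicial complex $\Delta$ with $V(\Delta)\subset\mathbb{N}$ is $t$-sortable with respect to the given labeling if $\mathrm{sort}(F,G)\in\Delta\times\Delta$ for all $F,G\in\Delta$ with $|F|=|G|=t$. *)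

From mathcomp Require Import all_boot.
Set Implicit Arguments. Unset Strict Implicit. Unset Printing Implicit Defensive.

(* Finite subsets of N are represented by duplicate-free sequences of nat. *)

Definition cycle_edge (n i j : nat) : bool :=
  [&& 1 <= i <= n, 1 <= j <= n &
      [|| j == i.+1, i == j.+1, (i == 1) && (j == n) | (i == n) && (j == 1)]].

Definition independent (V : pred nat) (e : rel nat) (A : seq nat) : bool :=
  [&& uniq A, all V A & all (fun i => all (fun j => ~~ e i j) A) A].

Definition cycle_vertices (n : nat) : pred nat := fun i => 1 <= i <= n.

Definition indep_cycle (n : nat) (A : seq nat) : bool :=
  independent (cycle_vertices n) (cycle_edge n) A.

(* sort(F,G): write x^F x^G = x_{i_1}...x_{i_{r+s}} with i_1 <= ... <= i_{r+s};
   first component collects i_k with k odd, second with k even (1-based k). *)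
Definition odd_pos (s : seq nat) : seq nat :=
  [seq nth 0 s k | k <- iota 0 (size s) & ~~ odd k].
Definition even_pos (s : seq nat) : seq nat :=
  [seq nth 0 s k | k <- iota 0 (size s) & odd k].

Definition sort_pair (F G : seq nat) : seq nat * seq nat :=
  let s := sort leq (F ++ G) in (odd_pos s, even_pos s).

Definition t_sortable (Delta : seq nat -> bool) (t : nat) : Prop :=
  forall F G : seq nat, Delta F -> Delta G -> size F = t -> size G = t ->
    Delta (sort_pair F G).1 /\ Delta (sort_pair F G).2.

From mathcomp Require Import all_boot.
From mathcomp Require Import zify.
Set Implicit Arguments. Unset Strict Implicit. Unset Printing Implicit Defensive.

(* Let F, G be independent sets of C_n of the same size and s the sorted merge
   of F and G, so sort(F,G) = (entries of s at even positions, entries at odd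
   positions) with 0-based positions.  The whole proof rests on one counting
   fact: if neither F nor G contains both endpoints u, v of a "forbidden pair"
   (an edge of C_n, or a pair {x, x+1}), then s holds at most two entries
   in {u, v}, so no three positions of s carry values in {u, v}.  Applied to
   {s_i, s_i + 1} this gives the gap s_(i+2) >= s_i + 2, hence two entries of
   s at positions of equal parity differ by at least 2; applied to the edge
   {1, n} it shows that 1 and n never sit at positions of equal parity (this
   also uses that s has even length).  Together these say each parity class
   of s is an independent set.  The argument works for every n and t. *)

Lemma count_pair_le1 (A : seq nat) (u v : nat) :
  uniq A -> ~~ ((u \in A) && (v \in A)) -> count (pred2 u v) A <= 1.
Proof.
move=> uniqA notboth.
have := count_predUI (pred1 u) (pred1 v) A.
rewrite -/(count_mem u A) -/(count_mem v A) !count_uniq_mem //.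
have -> : count (predU (pred1 u) (pred1 v)) A = count (pred2 u v) A by [].
by move: notboth; case: (u \in A); case: (v \in A) => //= _; lia.
Qed.

Lemma count_three_positions (a : pred nat) (s : seq nat) (p q r : nat) :
  p < q -> q < r -> r < size s ->
  a (nth 0 s p) -> a (nth 0 s q) -> a (nth 0 s r) -> 3 <= count a s.
Proof.
move=> pq qr rs ap aq ar.
have qs : q < size s by lia.
rewrite -(cat_take_drop q s) count_cat (drop_nth 0 qs) /= aq.
have before : 0 < count a (take q s).
  rewrite -has_count; apply/hasP; exists (nth 0 s p) => //.
  rewrite -(nth_take 0 pq); apply: mem_nth; by rewrite size_take qs.
have after : 0 < count a (drop q.+1 s).
  rewrite -has_count; apply/hasP; exists (nth 0 s r) => //.
  have -> : r = q.+1 + (r - q.+1) by lia.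
  have inside : r - q.+1 < size (drop q.+1 s) by rewrite size_drop; lia.
  by rewrite -nth_drop; apply: mem_nth.
lia.
Qed.

Lemma cycle_edge_sym (n x y : nat) : cycle_edge n x y = cycle_edge n y x.
Proof.
rewrite /cycle_edge andbCA; congr (_ && (_ && _)).
by rewrite orbCA [(y == 1) && _]andbC [(y == n) && _]andbC [_ || (_ && _)]orbC.
Qed.

Section IndependentSets.
Variables (n : nat) (A : seq nat).
Hypothesis indA : indep_cycle n A.

Lemma indep_uniq : uniq A.
Proof. by case/and3P: indA. Qed.

Lemma indep_vertex (x : nat) : x \in A -> 1 <= x <= n.
Proof. by case/and3P: indA => _ /allP vert _ /vert. Qed.

Lemma indep_no_edge (x y : nat) : x \in A -> y \in A -> ~~ cycle_edge n x y.
Proof. by move=> xA yA; case/and3P: indA => _ _ /allP /(_ x xA) /allP /(_ y yA). Qed.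

Lemma indep_avoids_consecutive (x : nat) : ~~ ((x \in A) && (x.+1 \in A)).
Proof.
apply/negP => /andP [xA x1A].
have edge : cycle_edge n x x.+1.
  by rewrite /cycle_edge (indep_vertex xA) (indep_vertex x1A) eqxx.
by move: (indep_no_edge xA x1A); rewrite edge.
Qed.

Lemma indep_avoids_ends : ~~ ((1 \in A) && (n \in A)).
Proof.
apply/negP => /andP [oneA nA].
have edge : cycle_edge n 1 n.
  by rewrite /cycle_edge (indep_vertex oneA) (indep_vertex nA) !eqxx !orbT.
by move: (indep_no_edge oneA nA); rewrite edge.
Qed.

End IndependentSets.

Section SortedMerge.
Variables (n : nat) (F G : seq nat).
Hypotheses (indF : indep_cycle n F) (indG : indep_cycle n G).
Hypothesis sizeFG : size F = size G.

Let s := sort leq (F ++ G).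

Lemma merge_count (a : pred nat) : count a s = count a F + count a G.
Proof. by rewrite count_sort count_cat. Qed.

Lemma merge_size_even : ~~ odd (size s).
Proof. by rewrite size_sort size_cat sizeFG addnn odd_double. Qed.

Lemma merge_vertex (i : nat) : i < size s -> 1 <= nth 0 s i <= n.
Proof.
move=> /(mem_nth 0); rewrite mem_sort mem_cat => /orP [].
- exact: (indep_vertex indF).
- exact: (indep_vertex indG).
Qed.

Lemma merge_no_loop (i : nat) : i < size s -> ~~ cycle_edge n (nth 0 s i) (nth 0 s i).
Proof.
move=> /(mem_nth 0); rewrite mem_sort mem_cat => /orP [] x_in.
- exact: (indep_no_edge indF).
- exact: (indep_no_edge indG).
Qed.

Lemma merge_mono (i j : nat) : i <= j -> j < size s -> nth 0 s i <= nth 0 s j.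
Proof.
move=> ij js; have sorted_s : sorted leq s by apply: sort_sorted; exact: leq_total.
by apply: (sorted_leq_nth leq_trans leqnn 0 sorted_s) => //; rewrite inE; lia.
Qed.

Lemma merge_no_three (u v p q r : nat) :
  ~~ ((u \in F) && (v \in F)) -> ~~ ((u \in G) && (v \in G)) ->
  p < q -> q < r -> r < size s ->
  pred2 u v (nth 0 s p) -> pred2 u v (nth 0 s q) -> pred2 u v (nth 0 s r) -> False.
Proof.
move=> avF avG pq qr rs ap aq ar.
have := count_three_positions (a := pred2 u v) pq qr rs ap aq ar.
have := count_pair_le1 (indep_uniq indF) avF.
have := count_pair_le1 (indep_uniq indG) avG.
by rewrite merge_count ltnNge => cG cF; rewrite (leq_add cF cG).
Qed.

Lemma merge_gap (i : nat) : i.+2 < size s -> nth 0 s i + 2 <= nth 0 s i.+2.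
Proof.
move=> i2s; rewrite leqNgt; apply/negP => close.
have m01 := merge_mono (leqnSn i) (ltnW i2s).
have m12 := merge_mono (leqnSn i.+1) i2s.
apply: (@merge_no_three (nth 0 s i) (nth 0 s i).+1 i i.+1 i.+2) => //.
- exact: (indep_avoids_consecutive indF).
- exact: (indep_avoids_consecutive indG).
- by rewrite /= eqxx.
- by apply/orP; lia.
- by apply/orP; lia.
Qed.

Lemma merge_gap_same_parity (i j : nat) :
  i < j -> odd i = odd j -> j < size s -> nth 0 s i + 2 <= nth 0 s j.
Proof.
move=> ij par js.
have i2j : i.+2 <= j.
  case: (ltngtP j i.+1) => [|//|ji]; first lia.
  by move: par; rewrite ji /=; case: (odd i).
apply: leq_trans (merge_gap _) (merge_mono i2j js); lia.
Qed.

(* 1 and n are never found at positions of equal parity: a third entry in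
   {1, n} would sit just before the 1 or just after the n, unless these are
   the first and last positions, which have different parities. *)
Lemma merge_ends_parity (i j : nat) :
  i < j -> odd i = odd j -> j < size s -> nth 0 s i = 1 -> nth 0 s j = n -> False.
Proof.
move=> ij par js si sj.
have no_three := @merge_no_three 1 n _ _ _
  (indep_avoids_ends indF) (indep_avoids_ends indG).
case: i ij par si => [|i] ij par si.
- have [j1s | last_j] : j.+1 < size s \/ j.+1 = size s by lia.
  + have := merge_vertex j1s; have := merge_mono (leqnSn j) j1s.
    rewrite sj => le1 le2.
    apply: (no_three 0 j j.+1) => //=; rewrite ?si ?sj ?eqxx ?orbT //; lia.
  + by move: merge_size_even par; rewrite -last_j /= => /negbNE ->.
- have is' : i < size s by lia.
  have := merge_vertex is'; have := merge_mono (leqnSn i) (ltn_trans ij js).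
  rewrite si => le1 le2.
  apply: (no_three i i.+1 j) => //=; rewrite ?si ?sj ?eqxx ?orbT //; lia.
Qed.

Lemma merge_same_parity_no_edge (i j : nat) :
  i < j -> odd i = odd j -> j < size s -> ~~ cycle_edge n (nth 0 s i) (nth 0 s j).
Proof.
move=> ij par js.
have gap := merge_gap_same_parity ij par js.
rewrite /cycle_edge; apply/negP => /and3P [_ _ /or4P []]; try lia.
by move=> /andP [/eqP si /eqP sj]; apply: (merge_ends_parity ij par js si sj).
Qed.

Definition parity_class (b : bool) (l : seq nat) : seq nat :=
  [seq nth 0 l k | k <- iota 0 (size l) & odd k == b].

Lemma parity_classP (b : bool) (x : nat) :
  reflect (exists2 k, (k < size s) && (odd k == b) & x = nth 0 s k)
          (x \in parity_class b s).
Proof.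
apply: (iffP mapP) => [[k] | [k kP ->]]; last first.
  by exists k => //; rewrite mem_filter mem_iota /=; case/andP: kP => -> ->.
by rewrite mem_filter mem_iota => /andP [bk /andP [_ ks]] ->; exists k; rewrite ?ks.
Qed.

Lemma parity_class_indep (b : bool) : indep_cycle n (parity_class b s).
Proof.
apply/and3P; split.
- rewrite map_inj_in_uniq ?filter_uniq ?iota_uniq //.
  move=> i j; rewrite !mem_filter !mem_iota => /andP [/eqP pi /andP [_ is']]
    /andP [/eqP pj /andP [_ js]] sij.
  case: (ltngtP i j) => // c.
  + by have := merge_gap_same_parity c (etrans pi (esym pj)) js; lia.
  + by have := merge_gap_same_parity c (etrans pj (esym pi)) is'; lia.
- by apply/allP => x /parity_classP [k /andP [ks _] ->]; apply: merge_vertex.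
- apply/allP => x /parity_classP [i /andP [is' /eqP pi] ->].
  apply/allP => y /parity_classP [j /andP [js /eqP pj] ->].
  case: (ltngtP i j) => [ij | ji | <-].
  + exact: merge_same_parity_no_edge ij (etrans pi (esym pj)) js.
  + rewrite cycle_edge_sym.
    exact: merge_same_parity_no_edge ji (etrans pj (esym pi)) is'.
  + exact: merge_no_loop.
Qed.

End SortedMerge.

(* odd_pos and even_pos (1-based parities) are the parity classes false and
   true (0-based parities). *)
Lemma odd_pos_parity_class (l : seq nat) : odd_pos l = parity_class false l.
Proof. by rewrite /odd_pos /parity_class; congr map; apply: eq_filter => k; case: odd. Qed.

Lemma even_pos_parity_class (l : seq nat) : even_pos l = parity_class true l.
Proof. by rewrite /even_pos /parity_class; congr map; apply: eq_filter => k; case: odd. Qed.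

Theorem proposition1p11 (n t : nat) :
  3 <= n -> 0 < t -> t_sortable (indep_cycle n) t.
Proof.
move=> _ _ F G indF indG sizeF sizeG.
have sizeFG : size F = size G by rewrite sizeF sizeG.
rewrite /sort_pair /= odd_pos_parity_class even_pos_parity_class.
by split; apply: parity_class_indep.
Qed.
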